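(* There is a universal constant $C$ such that for every positive integer $s$, every integer $k$ with $0<k<s/2$, and every $x\in\mathbb{R}$, $$|\Phi(y_k)-\Phi(y_k^* )|\le \frac{C}{\sqrt{s}}\big(1+t_k^2\big),$$ where $\Phi$ is the standard normal distribution function.
   Context: For a positive integer $s$, let $X_s$ be the size of an $(s,s+1)$-core with distinct parts chosen uniformly at random (a partition is an $s$-core if no cell of its Ferrers diagram has hook length $s$, where the hook length of a cell is the number of cells strictly to its right plus the number strictly above it plus one; an $(s,s+1)$-core is simultaneously an $s$-core and an $(s+1)$-core; the size is the sum of the parts). Let $\mu$ and $\sigma^2$ be the mean and variance of $X_s$. For integers $0<k<s/2$ put $\mu_k=\tfrac12 k(s+1-k)$ and $\sigma_k^2=\tfrac1{12}k(s+1-k)(s-2k)$ with $\sigma_k>0$, and for $x\in\mathbb{R}$ put $y_k=\frac{1}{\sigma_k}\big((\mu-\mu_k)+x\sigma\big)$. Let $c_0=(5-\sqrt5)/10$, $k_0=\lfloor c_0 s\rfloor$, $t_k=5^{3/4}(k-k_0)/\sqrt{s}$, $a=\sqrt{8/5}$, $b=-\sqrt{3/5}$, and $y_k^*=ax+bt_k$. *)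

From Stdlib Require Import Reals List Arith Lia Lra.
From Coquelicot Require Import Coquelicot.
Import ListNotations.
Open Scope R_scope.

(* A partition is a list of positive parts in weakly decreasing order
   [lam_0 >= lam_1 >= ...]; row i (0-based) of the Ferrers diagram has
   lam_i cells in columns 0 .. lam_i - 1. *)

Definition conj_part (lam : list nat) (j : nat) : nat :=
  length (filter (fun p => Nat.ltb j p) lam).

Definition hook (lam : list nat) (i j : nat) : nat :=
  (nth i lam 0%nat - j - 1) + (conj_part lam j - i - 1) + 1.

Definition has_hookb (lam : list nat) (h : nat) : bool :=
  existsb (fun i => existsb (fun j => Nat.eqb (hook lam i j) h)
                            (seq 0 (nth i lam 0%nat)))
          (seq 0 (length lam)).

Definition is_coreb (s : nat) (lam : list nat) : bool := negb (has_hookb lam s).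

Definition is_ss1_coreb (s : nat) (lam : list nat) : bool :=
  is_coreb s lam && is_coreb (S s) lam.

(** Partitions with distinct parts, all parts <= N: subsets of {1..N}
    listed in strictly decreasing order. *)
Fixpoint subsets (l : list nat) : list (list nat) :=
  match l with
  | [] => [[]]
  | x :: t => let r := subsets t in map (cons x) r ++ r
  end.

Definition distinct_partitions_le (N : nat) : list (list nat) :=
  subsets (rev (seq 1 N)).

(* Every part of an
   (s,s+1)-core is < s^2 (the largest hook length is at most the
   Frobenius number s(s+1)-s-(s+1) = s^2-s-1), so the bound N = s*s
   loses nothing. *)
Definition dcores (s : nat) : list (list nat) :=
  filter (is_ss1_coreb s) (distinct_partitions_le (s * s)).

Definition psize (lam : list nat) : R := INR (fold_right Nat.add 0%nat lam).

Definition sumR (l : list R) : R := fold_right Rplus 0 l.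

Definition mu (s : nat) : R :=
  sumR (map psize (dcores s)) / INR (length (dcores s)).

Definition sigma2 (s : nat) : R :=
  sumR (map (fun lam => (psize lam - mu s) ^ 2) (dcores s))
  / INR (length (dcores s)).

Definition sigma (s : nat) : R := sqrt (sigma2 s).

Definition Phi (y : R) : R :=
  / sqrt (2 * PI) *
  RInt_gen (fun t => exp (- t ^ 2 / 2)) (Rbar_locally m_infty) (at_point y).

Definition mu_k (s k : nat) : R := / 2 * INR k * (INR s + 1 - INR k).
Definition sigma_k2 (s k : nat) : R :=
  / 12 * INR k * (INR s + 1 - INR k) * (INR s - 2 * INR k).
Definition sigma_k (s k : nat) : R := sqrt (sigma_k2 s k).

Definition y_k (s k : nat) (x : R) : R :=
  / sigma_k s k * ((mu s - mu_k s k) + x * sigma s).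

Definition c0 : R := (5 - sqrt 5) / 10.
(* floor (c0 * s); Int_part is the floor function *)
Definition k0 (s : nat) : R := IZR (Int_part (c0 * INR s)).
Definition t_k (s k : nat) : R := Rpower 5 (3 / 4) * (INR k - k0 s) / sqrt (INR s).
Definition a_const : R := sqrt (8 / 5).
Definition b_const : R := - sqrt (3 / 5).
Definition y_k_star (s k : nat) (x : R) : R := a_const * x + b_const * t_k s k.

(* A partition into distinct parts is an (s, s+1)-core exactly when its largest part plus its
   number of parts is at most s: along the first row the hook lengths descend from that sum minus
   one to 1 in steps of at most two.  Removing the first column enumerates these cores by a
   Fibonacci recursion, so the moments of the size are explicit in s, F_s and F_(s+1); as
   F_s / F_(s+1) tends to the golden section, mu = s^2/10 + c0 s/2 + O(s) and
   sigma^2 = (8/5) sigma0^2 s^3 + O(s^2) with sigma0^2 = sqrt 5 / 300.  Expanding around k = c0 s,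
   sigma_k^2 = sigma0^2 s^3 + O((1 + |k - c0 s|) s^2) and mu - mu_k = - sqrt 5 (k - c0 s) s / 10
   + O(s), hence y_k = - kappa (k - k0) / sqrt s + (sigma / sigma_k) x + O((1 + t_k^2) / sqrt s).
   As Phi is 1-Lipschitz and |Phi (c + l x) - Phi (c + l' x)| <= |l - l'| (1 + |c|) / min(l, l'),
   this gives the claim when t_k^2 < sqrt s; otherwise, or for small s, |Phi - Phi| <= 4 does. *)

From Coquelicot Require Import Coquelicot.
From Stdlib Require Import Reals List Arith Lia Lra Permutation Sorted.
Import ListNotations.
Open Scope R_scope.

(** * Hooks of partitions into distinct parts *)

Section Cores.
Local Open Scope nat_scope.

Definition distinct_parts (l : list nat) : Prop :=
  StronglySorted gt l /\ Forall (lt 0) l.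

(* For a nonempty partition, [hd 0 l + length l - 1] is the hook length of the corner cell. *)
Definition corner_hook_lt (s : nat) (l : list nat) : Prop :=
  hd 0 l + length l <= s.

Lemma distinct_parts_nil : distinct_parts [].
Proof. split; constructor. Qed.

Lemma distinct_parts_cons x t :
  distinct_parts (x :: t) <-> distinct_parts t /\ Forall (gt x) t /\ 0 < x.
Proof.
  split.
  - intros [[Ht Hx]%StronglySorted_inv Hpos]. inversion Hpos; subst.
    repeat split; auto.
  - intros [[Ht Htpos] [Hx Hxpos]]. split; [now constructor | now constructor].
Qed.

Lemma Forall_le_hd l : StronglySorted gt l -> Forall (ge (hd 0 l)) l.
Proof.
  intros Hl. destruct l as [|x t]; [constructor|].
  apply StronglySorted_inv in Hl as [_ Hx]. constructor; [simpl; lia|].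
  eapply Forall_impl; [|exact Hx]. intros; simpl in *; lia.
Qed.

Lemma In_distinct_partitions_le N lam :
  In lam (distinct_partitions_le N) <-> distinct_parts lam /\ Forall (ge N) lam.
Proof.
  unfold distinct_partitions_le. revert lam. induction N as [|N IH]; intros lam.
  - simpl. split.
    + intros [<- | []]. split; [apply distinct_parts_nil | constructor].
    + intros [[_ Hpos] Hle]. left. destruct lam as [|x t]; [reflexivity|].
      inversion Hpos; inversion Hle; lia.
  - rewrite seq_S, rev_app_distr. simpl. rewrite in_app_iff, in_map_iff. split.
    + intros [[t [<- Ht]] | Hlam]; apply IH in Ht || apply IH in Hlam.
      * destruct Ht as [Ht Hle]. split.
        -- apply distinct_parts_cons. split; [exact Ht | split; [|lia]].
           eapply Forall_impl; [|exact Hle]. intros; simpl in *; lia.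
        -- constructor; [lia|]. eapply Forall_impl; [|exact Hle]. intros; simpl in *; lia.
      * destruct Hlam as [Hlam Hle]. split; auto.
        eapply Forall_impl; [|exact Hle]. intros; simpl in *; lia.
    + intros [Hlam Hle]. destruct lam as [|x t]; [right; apply IH; split; auto|].
      pose proof Hlam as [Ht [Hx _]]%distinct_parts_cons.
      inversion Hle as [|? ? HxN HtN]; subst.
      destruct (Nat.eq_dec x (S N)) as [-> | Hne].
      * left. exists t. split; [reflexivity|]. apply IH. split; auto.
        eapply Forall_impl; [|exact Hx]. intros; simpl in *; lia.
      * right. apply IH. split; auto. constructor; [lia|].
        eapply Forall_impl; [|exact Hx]. intros; simpl in *; lia.
Qed.

Lemma subsets_incl l lam : In lam (subsets l) -> incl lam l.
Proof.
  revert lam. induction l as [|x t IH]; intros lam H; simpl in H.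
  - destruct H as [<- | []]. intros a [].
  - rewrite in_app_iff, in_map_iff in H. destruct H as [[l' [<- Hl']] | H].
    + intros a [<- | Ha]; [now left | right; eapply IH; eauto].
    + intros a Ha. right. eapply IH; eauto.
Qed.

Lemma NoDup_subsets l : NoDup l -> NoDup (subsets l).
Proof.
  induction l as [|x t IH]; intros Hnd; simpl; [repeat constructor; intros []|].
  inversion Hnd as [|? ? Hx Ht]; subst. apply NoDup_app; auto.
  - apply FinFun.Injective_map_NoDup; auto. intros a b Hab. now inversion Hab.
  - intros a Ha Ha'. apply in_map_iff in Ha as [l' [<- _]].
    apply Hx, (subsets_incl _ _ Ha'). now left.
Qed.

Lemma has_hookb_spec lam h :
  has_hookb lam h = true <->
  exists i j, i < length lam /\ j < nth i lam 0 /\ hook lam i j = h.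
Proof.
  unfold has_hookb. rewrite existsb_exists. split.
  - intros [i [Hi Hj]]. apply in_seq in Hi. apply existsb_exists in Hj as [j [Hj Hh]].
    apply in_seq in Hj. apply Nat.eqb_eq in Hh. exists i, j. repeat split; lia.
  - intros [i [j [Hi [Hj Hh]]]]. exists i. split; [apply in_seq; lia|].
    apply existsb_exists. exists j. split; [apply in_seq; lia | now apply Nat.eqb_eq].
Qed.

Lemma conj_part_all l j : Forall (lt j) l -> conj_part l j = length l.
Proof.
  unfold conj_part. induction 1 as [|x t Hx _ IH]; [reflexivity|].
  simpl. apply Nat.ltb_lt in Hx. rewrite Hx. simpl. now f_equal.
Qed.

Lemma conj_part_none l j : Forall (ge j) l -> conj_part l j = 0.
Proof.
  unfold conj_part. induction 1 as [|x t Hx _ IH]; [reflexivity|].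
  simpl. replace (j <? x) with false by (symmetry; apply Nat.ltb_ge; lia). exact IH.
Qed.

Lemma conj_part_le_S l j : StronglySorted gt l -> conj_part l j <= S (conj_part l (S j)).
Proof.
  unfold conj_part. induction 1 as [|x t Ht IH Hx]; simpl; [lia|].
  destruct (Nat.ltb_spec j x), (Nat.ltb_spec (S j) x); simpl; try lia.
  assert (Hnone : conj_part t j = 0).
  { apply conj_part_none. eapply Forall_impl; [|exact Hx]. intros; simpl in *; lia. }
  unfold conj_part in Hnone. lia.
Qed.

Lemma hook_le_corner lam i j :
  distinct_parts lam -> i < length lam -> hook lam i j < hd 0 lam + length lam.
Proof.
  intros [Hsort Hpos] Hi. unfold hook.
  assert (Hhd : 0 < hd 0 lam) by (destruct lam; [simpl in Hi; lia | now inversion Hpos]).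
  assert (Hnth : nth i lam 0 <= hd 0 lam).
  { apply (proj1 (Forall_nth _ _) (Forall_le_hd _ Hsort) i 0 Hi). }
  assert (Hconj : conj_part lam j <= length lam) by apply filter_length_le.
  lia.
Qed.

Lemma descent_hits (s n : nat) (h : nat -> nat) :
  s <= h 0 -> h n <= S s -> (forall j, j < n -> h j <= h (S j) + 2) ->
  exists j, j <= n /\ (h j = s \/ h j = S s).
Proof.
  revert h. induction n as [|n IH]; intros h H0 Hn Hstep.
  - exists 0. split; lia.
  - destruct (le_lt_dec (h 0) (S s)).
    + exists 0. split; lia.
    + destruct (IH (fun j => h (S j))) as [j [Hj Hh]]; auto.
      * specialize (Hstep 0). lia.
      * intros j Hj. apply Hstep. lia.
      * exists (S j). split; [lia | exact Hh].
Qed.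

Lemma no_hook_ge lam v :
  distinct_parts lam -> hd 0 lam + length lam <= v -> has_hookb lam v = false.
Proof.
  intros Hlam Hv. apply Bool.not_true_iff_false. rewrite has_hookb_spec.
  intros [i [j [Hi [_ Hh]]]]. pose proof (hook_le_corner lam i j Hlam Hi). lia.
Qed.

(* Along the first row the hook lengths descend from [hd + length - 1] to 1
   in steps of at most two, so they cannot jump over both s and s + 1. *)
Lemma has_hook_s_or_S s lam :
  distinct_parts lam -> s < hd 0 lam + length lam ->
  has_hookb lam s = true \/ has_hookb lam (S s) = true.
Proof.
  intros Hlam Hbig. destruct lam as [|p t]; [simpl in Hbig; lia|].
  pose proof Hlam as [_ [Hlt Hp]]%distinct_parts_cons. simpl in Hbig.
  assert (Hcol0 : conj_part (p :: t) 0 = length (p :: t)) by apply conj_part_all, (proj2 Hlam).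
  assert (Hcol_last : conj_part (p :: t) (p - 1) = 1).
  { unfold conj_part. simpl. replace (p - 1 <? p) with true by (symmetry; apply Nat.ltb_lt; lia).
    simpl. f_equal. apply conj_part_none.
    eapply Forall_impl; [|exact Hlt]. intros; simpl in *; lia. }
  destruct (descent_hits s (p - 1) (fun j => hook (p :: t) 0 j)) as [j [Hj Hhit]].
  - unfold hook. simpl nth. rewrite Hcol0. simpl length. lia.
  - unfold hook. simpl nth. rewrite Hcol_last. lia.
  - intros j Hj. unfold hook. simpl nth.
    pose proof (conj_part_le_S (p :: t) j (proj1 Hlam)).
    assert (conj_part (p :: t) (S j) >= 1).
    { unfold conj_part. simpl. replace (S j <? p) with true by (symmetry; apply Nat.ltb_lt; lia).
      simpl. lia. }
    lia.
  - assert (Hhook : forall v, hook (p :: t) 0 j = v -> has_hookb (p :: t) v = true).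
    { intros v Hv. apply has_hookb_spec. exists 0, j. simpl. repeat split; auto; lia. }
    destruct Hhit as [Hv | Hv]; apply Hhook in Hv; auto.
Qed.

Lemma ss1_core_iff s lam :
  distinct_parts lam -> is_ss1_coreb s lam = true <-> corner_hook_lt s lam.
Proof.
  intros Hlam. unfold is_ss1_coreb, is_coreb, corner_hook_lt.
  rewrite Bool.andb_true_iff, !Bool.negb_true_iff. split.
  - intros [Hs HSs]. apply Nat.nlt_ge. intros Hbig.
    destruct (has_hook_s_or_S s lam Hlam Hbig); congruence.
  - intros Hsmall. split; apply no_hook_ge; auto; lia.
Qed.

Lemma In_dcores s lam : In lam (dcores s) <-> distinct_parts lam /\ corner_hook_lt s lam.
Proof.
  unfold dcores. rewrite filter_In, In_distinct_partitions_le. split.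
  - intros [[Hlam _] Hcore]. split; auto. now apply ss1_core_iff.
  - intros [Hlam Hsmall]. split; [split; auto | now apply ss1_core_iff].
    pose proof (Forall_le_hd _ (proj1 Hlam)) as Hle. unfold corner_hook_lt in Hsmall.
    eapply Forall_impl; [|exact Hle]. intros; simpl in *; nia.
Qed.

(** * A Fibonacci-type enumeration *)

(* Adding one to every part raises [hd + length] by one, adding one to every part and appending
   a part 1 raises it by two, and every partition into distinct parts arises from exactly one
   smaller one in one of these two ways ([distinct_parts_cases]). *)
Fixpoint dcores_rec (s : nat) : list (list nat) :=
  match s with
  | 0 | 1 => [[]]
  | S (S n as m) => map (map S) (dcores_rec m) ++ map (fun l => map S l ++ [1]) (dcores_rec n)
  end.

Lemma dcores_rec_SS n :
  dcores_rec (S (S n)) =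
  map (map S) (dcores_rec (S n)) ++ map (fun l => map S l ++ [1]) (dcores_rec n).
Proof. reflexivity. Qed.

Lemma distinct_parts_map_S l : distinct_parts l -> distinct_parts (map S l).
Proof.
  induction l as [|x t IH]; [trivial|]. intros [Ht [Hx Hxpos]]%distinct_parts_cons.
  simpl. apply distinct_parts_cons. split; [now apply IH|]. split; [|lia].
  apply Forall_map. eapply Forall_impl; [|exact Hx]. intros; simpl in *; lia.
Qed.

Lemma distinct_parts_snoc_one l : distinct_parts l -> distinct_parts (map S l ++ [1]).
Proof.
  induction l as [|x t IH]; intros Hl.
  - split; repeat constructor.
  - apply distinct_parts_cons in Hl as [Ht [Hx Hxpos]].
    simpl. apply distinct_parts_cons. split; [now apply IH|]. split; [|lia].
    apply Forall_app. split; [|constructor; [lia | constructor]].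
    apply Forall_map. eapply Forall_impl; [|exact Hx]. intros; simpl in *; lia.
Qed.

Lemma distinct_parts_cases lam :
  distinct_parts lam ->
  (exists l, distinct_parts l /\ lam = map S l) \/
  (exists l, distinct_parts l /\ lam = map S l ++ [1]).
Proof.
  induction lam as [|x t IH]; intros Hlam.
  - left. exists []. split; [apply distinct_parts_nil | reflexivity].
  - apply distinct_parts_cons in Hlam as [Ht [Hx Hxpos]].
    assert (Hcons : forall l, distinct_parts l -> Forall (gt x) (map S l) -> 1 < x ->
                      distinct_parts (pred x :: l)).
    { intros l Hl Hxl Hx1. apply distinct_parts_cons. split; [exact Hl | split; [|lia]].
      rewrite Forall_map in Hxl. eapply Forall_impl; [|exact Hxl]. intros; simpl in *; lia. }
    destruct (IH Ht) as [[l [Hl ->]] | [l [Hl ->]]].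
    + destruct (Nat.eq_dec x 1) as [-> | Hx1].
      * destruct l as [|y l]; [right; exists []; split; [apply distinct_parts_nil | reflexivity]|].
        inversion Hx. lia.
      * left. exists (pred x :: l). split; [apply Hcons; auto; lia | simpl; f_equal; lia].
    + apply Forall_app in Hx as [Hxl Hx1]. inversion Hx1.
      right. exists (pred x :: l). split; [apply Hcons; auto; lia | simpl; f_equal; lia].
Qed.

Lemma corner_hook_lt_map_S n l : corner_hook_lt (S n) (map S l) <-> corner_hook_lt n l.
Proof. unfold corner_hook_lt. destruct l; simpl; rewrite ?length_map; lia. Qed.

Lemma corner_hook_lt_snoc_one n l :
  corner_hook_lt (S (S n)) (map S l ++ [1]) <-> corner_hook_lt n l.
Proof. unfold corner_hook_lt. destruct l; simpl; rewrite ?length_app, ?length_map; simpl; lia. Qed.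

Lemma corner_hook_lt_1 lam : distinct_parts lam -> corner_hook_lt 1 lam -> lam = [].
Proof.
  intros [_ Hpos] Hlam. destruct lam as [|x t]; [reflexivity|].
  inversion Hpos. unfold corner_hook_lt in Hlam. simpl in Hlam. lia.
Qed.

Lemma In_dcores_rec s lam :
  In lam (dcores_rec s) <-> distinct_parts lam /\ corner_hook_lt s lam.
Proof.
  revert lam. induction s as [s IH] using lt_wf_ind. intros lam.
  destruct s as [|[|n]].
  1, 2: split;
    [ intros [<- | []]; split; [apply distinct_parts_nil | unfold corner_hook_lt; simpl; lia]
    | intros [Hlam Hs]; left; symmetry; apply corner_hook_lt_1; auto;
      unfold corner_hook_lt in *; lia ].
  rewrite dcores_rec_SS, in_app_iff, !in_map_iff. split.
  - intros [[l [<- Hl]] | [l [<- Hl]]].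
    + apply IH in Hl as [Hl Hs]; [|lia].
      split; [now apply distinct_parts_map_S | now apply corner_hook_lt_map_S].
    + apply IH in Hl as [Hl Hs]; [|lia].
      split; [now apply distinct_parts_snoc_one | now apply corner_hook_lt_snoc_one].
  - intros [Hlam Hs]. destruct (distinct_parts_cases lam Hlam) as [[l [Hl ->]] | [l [Hl ->]]].
    + left. exists l. split; [reflexivity|]. apply IH; [lia|].
      split; [exact Hl | now apply corner_hook_lt_map_S].
    + right. exists l. split; [reflexivity|]. apply IH; [lia|].
      split; [exact Hl | now apply corner_hook_lt_snoc_one].
Qed.

Lemma map_S_inj (a b : list nat) : map S a = map S b -> a = b.
Proof.
  revert b. induction a as [|x a IH]; intros [|y b] H; simpl in H; try discriminate; [reflexivity|].
  injection H as -> H. f_equal. now apply IH.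
Qed.

Lemma NoDup_dcores_rec s : NoDup (dcores_rec s).
Proof.
  induction s as [s IH] using lt_wf_ind.
  destruct s as [|[|n]]; [repeat constructor; intros [] .. |].
  rewrite dcores_rec_SS. apply NoDup_app.
  - apply FinFun.Injective_map_NoDup; [exact map_S_inj | apply IH; lia].
  - apply FinFun.Injective_map_NoDup; [|apply IH; lia].
    intros a b Hab. now apply app_inj_tail, proj1, map_S_inj in Hab.
  - intros lam Hl Hr. apply in_map_iff in Hl as [l [<- Hl]].
    apply in_map_iff in Hr as [l' [Heq _]].
    apply In_dcores_rec in Hl as [[_ Hpos] _].
    assert (Hone : In 1 (map S l)) by (rewrite <- Heq; apply in_or_app; right; now left).
    apply in_map_iff in Hone as [p [Hp Hin]]. rewrite Forall_forall in Hpos.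
    specialize (Hpos p Hin). lia.
Qed.

Lemma dcores_perm s : Permutation (dcores s) (dcores_rec s).
Proof.
  apply NoDup_Permutation.
  - apply NoDup_filter, NoDup_subsets, NoDup_rev, seq_NoDup.
  - apply NoDup_dcores_rec.
  - intros lam. rewrite In_dcores, In_dcores_rec. reflexivity.
Qed.

End Cores.

(** * Moments of the size and the number of parts *)

Lemma sumR_app (l1 l2 : list R) : sumR (l1 ++ l2) = sumR l1 + sumR l2.
Proof. unfold sumR. induction l1 as [|x l1 IH]; simpl; [ring | rewrite IH; ring]. Qed.

Lemma sumR_perm {A : Type} (g : A -> R) (L1 L2 : list A) :
  Permutation L1 L2 -> sumR (map g L1) = sumR (map g L2).
Proof. induction 1; unfold sumR in *; simpl; try congruence; ring. Qed.

Lemma sumR_nonneg (l : list R) : Forall (Rle 0) l -> 0 <= sumR l.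
Proof. induction 1; unfold sumR in *; simpl; lra. Qed.

Definition moment (g : R -> R -> R) (s : nat) : R :=
  sumR (map (fun l => g (INR (length l)) (psize l)) (dcores_rec s)).

Lemma psize_map_S l : psize (map S l) = psize l + INR (length l).
Proof.
  unfold psize. rewrite <- plus_INR. f_equal.
  induction l as [|x l IH]; simpl; lia.
Qed.

Lemma psize_snoc_one l : psize (l ++ [1%nat]) = psize l + 1.
Proof.
  unfold psize. rewrite fold_right_app. simpl. rewrite <- S_INR. f_equal.
  induction l as [|x l IH]; simpl; lia.
Qed.

Lemma moment_SS g n :
  moment g (S (S n)) =
  moment (fun m z => g m (z + m)) (S n) + moment (fun m z => g (m + 1) (z + m + 1)) n.
Proof.
  unfold moment. rewrite dcores_rec_SS, map_app, sumR_app, !map_map. f_equal; f_equal.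
  - apply map_ext. intros l. now rewrite length_map, psize_map_S.
  - apply map_ext. intros l.
    now rewrite length_app, length_map, plus_INR, psize_snoc_one, psize_map_S.
Qed.

Lemma moment_lincomb g s c1 c2 c3 c4 c5 c6 :
  (forall m z, g m z = c1 + c2 * m + c3 * m ^ 2 + c4 * z + c5 * z ^ 2 + c6 * (m * z)) ->
  moment g s =
  c1 * moment (fun _ _ => 1) s + c2 * moment (fun m _ => m) s + c3 * moment (fun m _ => m ^ 2) s
  + c4 * moment (fun _ z => z) s + c5 * moment (fun _ z => z ^ 2) s
  + c6 * moment (fun m z => m * z) s.
Proof.
  intros Hg. unfold moment, sumR.
  induction (dcores_rec s) as [|l L IH]; cbn [map fold_right]; [ring|].
  rewrite IH, Hg. ring.
Qed.

Fixpoint fib (n : nat) : nat :=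
  match n with
  | 0 => 0
  | 1 => 1
  | S (S m as p) => fib p + fib m
  end.

Definition fib_comb (p q : R -> R) (s : nat) : R :=
  p (INR s) * INR (fib (S s)) + q (INR s) * INR (fib s).

Definition mean_lead (S : R) : R := 7/50 * S + 1/10 * S ^ 2.
Definition mean_corr (S : R) : R := - 3/25 - 3/25 * S.
Definition second_lead (S : R) : R := 13/375 * S + 1/20 * S ^ 2 + 1/30 * S ^ 3 + 1/100 * S ^ 4.
Definition second_corr (S : R) : R := - 3/125 - 19/375 * S - 1/25 * S ^ 2 - 1/75 * S ^ 3.

Definition closed_moments (s : nat) : Prop :=
  moment (fun _ _ => 1) s = fib_comb (fun _ => 1) (fun _ => 0) s /\
  moment (fun m _ => m) s = fib_comb (fun S => 2/5 * S) (fun S => - 1/5 - 1/5 * S) s /\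
  moment (fun m _ => m ^ 2) s =
    fib_comb (fun S => 3/25 * S + 1/5 * S ^ 2) (fun S => 1/25 - 4/25 * S - 1/5 * S ^ 2) s /\
  moment (fun _ z => z) s = fib_comb mean_lead mean_corr s /\
  moment (fun _ z => z ^ 2) s = fib_comb second_lead second_corr s /\
  moment (fun m z => m * z) s =
    fib_comb (fun S => 1/10 * S + 1/10 * S ^ 2 + 1/25 * S ^ 3)
             (fun S => - 1/10 * S - 3/25 * S ^ 2 - 1/50 * S ^ 3) s.

Lemma fib_SS_INR k : INR (fib (S (S k))) = INR (fib (S k)) + INR (fib k).
Proof. apply plus_INR. Qed.

Ltac fib_algebra :=
  repeat match goal with H : moment ?g ?k = _ |- context [moment ?g ?k] => rewrite H end;
  unfold fib_comb, mean_lead, mean_corr, second_lead, second_corr;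
  rewrite !fib_SS_INR, !S_INR; field.

(* In each step the two coefficient lists expand g m (z + m) and g (m + 1) (z + m + 1) in the
   basis 1, m, m^2, z, z^2, m z of [moment_lincomb]. *)
Lemma closed_moments_all s : closed_moments s.
Proof.
  enough (H : forall n, closed_moments n /\ closed_moments (S n)) by apply H.
  induction n as [|n [IH0 IH1]].
  { split; unfold closed_moments, moment, fib_comb, mean_lead, mean_corr, second_lead, second_corr;
      simpl; unfold psize, sumR; simpl; repeat split; field. }
  split; [exact IH1|].
  destruct IH0 as [A0 [M0 [MM0 [Z0 [ZZ0 X0]]]]], IH1 as [A1 [M1 [MM1 [Z1 [ZZ1 X1]]]]].
  unfold closed_moments.
  repeat split.
  - rewrite moment_SS, (moment_lincomb _ (S n) 1 0 0 0 0 0), (moment_lincomb _ n 1 0 0 0 0 0)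
      by (intros; cbv beta; ring).
    fib_algebra.
  - rewrite moment_SS, (moment_lincomb _ (S n) 0 1 0 0 0 0), (moment_lincomb _ n 1 1 0 0 0 0)
      by (intros; cbv beta; ring).
    fib_algebra.
  - rewrite moment_SS, (moment_lincomb _ (S n) 0 0 1 0 0 0), (moment_lincomb _ n 1 2 1 0 0 0)
      by (intros; cbv beta; ring).
    fib_algebra.
  - rewrite moment_SS, (moment_lincomb _ (S n) 0 1 0 1 0 0), (moment_lincomb _ n 1 1 0 1 0 0)
      by (intros; cbv beta; ring).
    fib_algebra.
  - rewrite moment_SS, (moment_lincomb _ (S n) 0 0 1 0 1 2), (moment_lincomb _ n 1 2 1 2 1 2)
      by (intros; cbv beta; ring).
    fib_algebra.
  - rewrite moment_SS, (moment_lincomb _ (S n) 0 0 1 0 0 1), (moment_lincomb _ n 1 2 1 1 0 1)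
      by (intros; cbv beta; ring).
    fib_algebra.
Qed.

Lemma fib_S_pos n : 1 <= INR (fib (S n)).
Proof.
  apply (le_INR 1). induction n as [n IH] using lt_wf_ind.
  destruct n as [|[|n]]; simpl; try lia. specialize (IH n). simpl in IH. lia.
Qed.

Lemma moment_to_dcores (g : R -> R -> R) s :
  sumR (map (fun l => g (INR (length l)) (psize l)) (dcores s)) = moment g s.
Proof. apply sumR_perm, dcores_perm. Qed.

Lemma count_dcores s : INR (length (dcores s)) = INR (fib (S s)).
Proof.
  destruct (closed_moments_all s) as [Hcount _]. unfold fib_comb in Hcount.
  replace (INR (fib (S s))) with (moment (fun _ _ => 1) s) by (rewrite Hcount; ring).
  rewrite (Permutation_length (dcores_perm s)). unfold moment, sumR.
  induction (dcores_rec s) as [|l L IH]; cbn [length map fold_right]; [reflexivity|].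
  rewrite S_INR, IH. ring.
Qed.

Definition fib_ratio (s : nat) : R := INR (fib s) / INR (fib (S s)).

Lemma mu_formula s : mu s = mean_lead (INR s) + mean_corr (INR s) * fib_ratio s.
Proof.
  unfold mu. rewrite count_dcores, (moment_to_dcores (fun _ z => z)).
  destruct (closed_moments_all s) as [_ [_ [_ [Hz _]]]]. rewrite Hz.
  unfold fib_comb, fib_ratio. pose proof (fib_S_pos s). field. lra.
Qed.

Lemma sigma2_formula s :
  sigma2 s = second_lead (INR s) + second_corr (INR s) * fib_ratio s - mu s ^ 2.
Proof.
  unfold sigma2. rewrite count_dcores, (moment_to_dcores (fun _ z => (z - mu s) ^ 2)).
  rewrite (moment_lincomb _ s (mu s ^ 2) 0 0 (- 2 * mu s) 1 0) by (intros; ring).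
  destruct (closed_moments_all s) as [Hcount [_ [_ [Hz [Hzz _]]]]].
  rewrite Hcount, Hz, Hzz, mu_formula. unfold fib_comb, fib_ratio.
  pose proof (fib_S_pos s). field. lra.
Qed.

Lemma sigma2_nonneg s : 0 <= sigma2 s.
Proof.
  unfold sigma2. rewrite count_dcores. pose proof (fib_S_pos s).
  apply Rmult_le_pos; [|left; apply Rinv_0_lt_compat; lra].
  apply sumR_nonneg, Forall_forall. intros y Hy. apply in_map_iff in Hy as [l [<- _]].
  apply pow2_ge_0.
Qed.

(** * Asymptotics of the mean and the variance *)

Lemma sqrt5_sq : sqrt 5 * sqrt 5 = 5.
Proof. apply sqrt_sqrt. lra. Qed.

Lemma sqrt5_bounds : 2.236 < sqrt 5 < 2.2361.
Proof. pose proof sqrt5_sq. pose proof (sqrt_pos 5). split; nra. Qed.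

Lemma c0_bounds : 0.2763 < c0 < 0.2765.
Proof. unfold c0. pose proof sqrt5_bounds. lra. Qed.

Definition golden_conj : R := (sqrt 5 - 1) / 2.

Lemma golden_conj_eq : golden_conj * golden_conj + golden_conj = 1.
Proof. unfold golden_conj. pose proof sqrt5_sq. nra. Qed.

Lemma golden_conj_bounds : 0.618 < golden_conj < 0.61805.
Proof. unfold golden_conj. pose proof sqrt5_bounds. lra. Qed.

Lemma fib_ratio_bounds n : 0 <= fib_ratio n <= 1.
Proof.
  unfold fib_ratio. pose proof (fib_S_pos n). pose proof (pos_INR (fib n)).
  assert (INR (fib n) <= INR (fib (S n))).
  { destruct n as [|n]; [simpl; lra|]. rewrite fib_SS_INR. pose proof (pos_INR (fib n)). lra. }
  split; [apply Rdiv_le_0_compat; lra|].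
  apply (Rdiv_le_1 (INR (fib n)) (INR (fib (S n)))); lra.
Qed.

Lemma fib_ratio_S n : fib_ratio (S n) = / (1 + fib_ratio n).
Proof.
  unfold fib_ratio. rewrite fib_SS_INR. pose proof (fib_S_pos n). pose proof (pos_INR (fib n)).
  field. lra.
Qed.

(* The map x |-> 1 / (1 + x) contracts by a factor <= 21/50 near the golden ratio,
   which beats the loss (m / (m + 1))^2 for m >= 2. *)
Lemma fib_ratio_error n : Rabs (fib_ratio (S n) - golden_conj) <= 8 / (INR (S n) + 1) ^ 2.
Proof.
  induction n as [|n IH].
  - unfold fib_ratio. simpl. pose proof golden_conj_bounds. rewrite Rabs_pos_eq; lra.
  - pose proof golden_conj_bounds as Hg. pose proof golden_conj_eq.
    pose proof (fib_ratio_bounds (S n)) as Hr.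
    assert (Hhalf : / 2 <= fib_ratio (S n)).
    { rewrite fib_ratio_S. pose proof (fib_ratio_bounds n).
      apply Rinv_le_contravar; lra. }
    assert (Hfix : golden_conj = / (1 + golden_conj)).
    { field_simplify_eq; lra. }
    set (x := fib_ratio (S n)) in *.
    rewrite fib_ratio_S. fold x.
    rewrite Hfix at 1.
    replace (/ (1 + x) - / (1 + golden_conj))
      with ((golden_conj - x) / ((1 + x) * (1 + golden_conj))) by (field; lra).
    rewrite Rabs_div, (Rabs_pos_eq ((1 + x) * _)), Rabs_minus_sym by nra.
    pose proof (pos_INR n) as Hn. rewrite S_INR in *. rewrite S_INR.
    apply Rle_trans with (8 / (INR n + 1 + 1) ^ 2 * (21 / 50)).
    + unfold Rdiv at 1. apply Rmult_le_compat; [apply Rabs_pos | | exact IH |].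
      * left; apply Rinv_0_lt_compat; nra.
      * apply Rle_trans with (/ (3 / 2 * (16 / 10))); [apply Rinv_le_contravar; nra | lra].
    + set (m := INR n + 1 + 1). assert (Hm : 2 <= m) by (unfold m; lra).
      apply Rmult_le_reg_r with (m ^ 2 * (m + 1) ^ 2); [nra|].
      field_simplify; nra.
Qed.

Lemma Rabs_le_inv x y : Rabs x <= y -> - y <= x <= y.
Proof.
  intros H. pose proof (Rle_abs x). pose proof (Rle_abs (- x)). rewrite Rabs_Ropp in *. lra.
Qed.

Lemma Rabs_add_sub_le a b c : Rabs (a + b - c) <= Rabs a + Rabs b + Rabs c.
Proof.
  unfold Rminus. eapply Rle_trans; [apply Rabs_triang|]. rewrite Rabs_Ropp.
  pose proof (Rabs_triang a b). lra.
Qed.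

Definition sigma0_sq : R := sqrt 5 / 300.

Lemma mean_approx S x :
  1 <= S -> 0 <= x <= 1 ->
  Rabs (mean_lead S + mean_corr S * x - (S ^ 2 / 10 + c0 * S / 2)) <= S.
Proof.
  intros HS Hx. pose proof c0_bounds. unfold mean_lead, mean_corr.
  assert (0 <= (1 + S) * x <= 1 + S) by (split; nra).
  apply Rabs_le. split; nra.
Qed.

Lemma mu_approx s :
  (0 < s)%nat -> Rabs (mu s - (INR s ^ 2 / 10 + c0 * INR s / 2)) <= INR s.
Proof.
  intros Hs. rewrite mu_formula.
  apply mean_approx; [apply (le_INR 1); lia | apply fib_ratio_bounds].
Qed.

(* Writing x = golden_conj + e, the S^4 terms cancel and the S^3 term at e = 0 is
   (8/5) sigma0^2 S^3, because golden_conj^2 + golden_conj = 1. *)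
Lemma variance_expansion S x :
  let e := x - golden_conj in
  second_lead S + second_corr S * x - (mean_lead S + mean_corr S * x) ^ 2
    - 8 / 5 * sigma0_sq * S ^ 3 =
  ((- 9/625 - 6/625 * golden_conj) + (11/1875 + 22/1875 * golden_conj) * S
   + (2/125 + 4/125 * golden_conj) * S ^ 2)
  + e * (second_corr S - 2 * mean_corr S * (mean_lead S + golden_conj * mean_corr S))
  - e ^ 2 * mean_corr S ^ 2.
Proof.
  intros e. unfold e.
  replace sigma0_sq with ((2 * golden_conj + 1) / 300) by (unfold golden_conj, sigma0_sq; field).
  pose proof golden_conj_eq as Hg.
  replace (golden_conj ^ 2) with (1 - golden_conj) by (simpl; lra).
  unfold second_lead, second_corr, mean_lead, mean_corr.
  apply Rminus_diag_uniq.
  transitivity (- (golden_conj * golden_conj + golden_conj - 1) * (- 3/25 - 3/25 * S) ^ 2).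
  - field.
  - rewrite Hg. ring.
Qed.

Lemma variance_approx S x :
  100 <= S -> 0 <= x <= 1 -> Rabs (x - golden_conj) <= 8 / S ^ 2 ->
  Rabs (second_lead S + second_corr S * x - (mean_lead S + mean_corr S * x) ^ 2
        - 8 / 5 * sigma0_sq * S ^ 3) <= 10 * S ^ 2.
Proof.
  intros HS Hx He. rewrite variance_expansion. pose proof golden_conj_bounds as Hg.
  set (e := x - golden_conj) in *.
  assert (He8 : Rabs e * S ^ 2 <= 8).
  { apply Rmult_le_reg_r with (/ S ^ 2); [apply Rinv_0_lt_compat; nra|].
    rewrite Rmult_assoc, Rinv_r by nra. lra. }
  assert (He1 : Rabs e <= 1) by nra.
  assert (0 <= golden_conj * S <= S) by (split; nra).
  assert (0 <= golden_conj * S ^ 2 <= S ^ 2) by (split; nra).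
  assert (Hlead : Rabs ((- 9/625 - 6/625 * golden_conj) + (11/1875 + 22/1875 * golden_conj) * S
                        + (2/125 + 4/125 * golden_conj) * S ^ 2) <= S ^ 2).
  { apply Rabs_le. split; nra. }
  assert (Hcoef : Rabs (second_corr S - 2 * mean_corr S * (mean_lead S + golden_conj * mean_corr S))
                  <= S ^ 3).
  { unfold second_corr, mean_corr, mean_lead.
    assert (0 <= golden_conj * S ^ 3 <= S ^ 3) by (split; nra).
    apply Rabs_le. split; nra. }
  assert (Hcorr : Rabs (mean_corr S) <= S) by (unfold mean_corr; apply Rabs_le; split; lra).
  assert (Hlin : Rabs (e * (second_corr S
                            - 2 * mean_corr S * (mean_lead S + golden_conj * mean_corr S)))
                 <= 8 * S).
  { rewrite Rabs_mult. apply Rle_trans with (Rabs e * S ^ 3).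
    - apply Rmult_le_compat_l; [apply Rabs_pos | exact Hcoef].
    - replace (Rabs e * S ^ 3) with (Rabs e * S ^ 2 * S) by ring. nra. }
  assert (Hquad : Rabs (e ^ 2 * mean_corr S ^ 2) <= S ^ 2).
  { rewrite Rabs_mult, <- !RPow_abs.
    pose proof (Rabs_pos e). pose proof (Rabs_pos (mean_corr S)).
    rewrite <- (Rmult_1_l (S ^ 2)).
    apply Rmult_le_compat; [apply pow_le; lra | apply pow_le; lra | |].
    - rewrite <- (pow1 2). apply pow_incr. lra.
    - apply pow_incr. lra. }
  eapply Rle_trans; [apply Rabs_add_sub_le|]. nra.
Qed.

Lemma sigma2_approx s :
  100 <= INR s -> Rabs (sigma2 s - 8 / 5 * sigma0_sq * INR s ^ 3) <= 10 * INR s ^ 2.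
Proof.
  intros Hs. destruct s as [|n]; [simpl in Hs; lra|].
  rewrite sigma2_formula, mu_formula. apply variance_approx; [exact Hs | apply fib_ratio_bounds|].
  eapply Rle_trans; [apply fib_ratio_error|].
  apply Rmult_le_compat_l; [lra|]. apply Rinv_le_contravar; [nra|].
  apply pow_incr. lra.
Qed.

(** * The standard normal distribution function *)

(* The supremum of the integrals over [a, y] is the improper integral; the
   integrals increase as [a] decreases because [f] is nonnegative. *)
Lemma is_RInt_gen_m_infty_of_bounded (f : R -> R) (y M : R) :
  (forall a b, ex_RInt f a b) -> (forall t, 0 <= f t) ->
  (forall a, a <= y -> RInt f a y <= M) ->
  exists l, is_RInt_gen f (Rbar_locally m_infty) (at_point y) l /\ 0 <= l <= M.
Proof.
  intros Hex Hpos Hbound.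
  assert (Hmono : forall a b, a <= b -> b <= y -> RInt f b y <= RInt f a y).
  { intros a b Hab Hby.
    replace (RInt f a y) with (RInt f a b + RInt f b y)
      by (apply (RInt_Chasles (V := R_CompleteNormedModule)); apply Hex).
    assert (0 <= RInt f a b) by (apply RInt_ge_0; auto; intros; apply Hpos). lra. }
  set (E := fun v : R => exists a, a <= y /\ v = RInt f a y).
  destruct (completeness E) as [l [Hub Hlub]].
  { exists M. intros v [a [Ha ->]]. now apply Hbound. }
  { exists (RInt f y y). now exists y. }
  assert (Hyy : RInt f y y = 0) by apply (RInt_point (V := R_CompleteNormedModule)).
  exists l. split; [|split].
  - intros P [eps Heps].
    assert (Hnear : exists a0, a0 <= y /\ l - eps < RInt f a0 y).
    { apply Classical_Prop.NNPP. intros Hno.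
      assert (l <= l - eps); [|destruct eps; simpl in *; lra].
      apply Hlub. intros v [a [Ha ->]]. apply Rnot_lt_le. intros Hlt. apply Hno. now exists a. }
    destruct Hnear as [a0 [Ha0 Hl]].
    apply Filter_prod with (Q := fun a => a < a0) (R := fun b => b = y).
    + now exists a0.
    + reflexivity.
    + intros a b Ha ->. exists (RInt f a y).
      split; [apply (RInt_correct (V := R_CompleteNormedModule)), Hex|].
      apply Heps. change (Rabs (RInt f a y - l) < eps).
      assert (RInt f a y <= l) by (apply Hub; exists a; split; lra).
      pose proof (Hmono a a0 ltac:(lra) Ha0). rewrite Rabs_left1; lra.
  - rewrite <- Hyy. apply Hub. now exists y.
  - apply Hlub. intros v [a [Ha ->]]. now apply Hbound.
Qed.

Definition gauss (t : R) : R := exp (- t ^ 2 / 2).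

Lemma gauss_pos t : 0 < gauss t.
Proof. apply exp_pos. Qed.

Lemma gauss_exp_ineq t : 1 + t ^ 2 / 2 <= / gauss t.
Proof.
  unfold gauss. rewrite <- exp_Ropp. replace (- (- t ^ 2 / 2)) with (t ^ 2 / 2) by field.
  apply exp_ineq1_le.
Qed.

Lemma gauss_le_1 t : gauss t <= 1.
Proof.
  pose proof (gauss_exp_ineq t). pose proof (gauss_pos t). pose proof (pow2_ge_0 t).
  rewrite <- (Rinv_inv (gauss t)). rewrite <- Rinv_1. apply Rinv_le_contravar; lra.
Qed.

Lemma abs_mul_gauss_le_1 t : Rabs t * gauss t <= 1.
Proof.
  pose proof (gauss_exp_ineq t). pose proof (gauss_pos t).
  assert (Rabs t <= 1 + t ^ 2 / 2).
  { pose proof (Rabs_pos t). rewrite <- (pow2_abs t). nra. }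
  apply Rmult_le_reg_r with (/ gauss t); [now apply Rinv_0_lt_compat|].
  rewrite Rmult_assoc, Rinv_r by lra. lra.
Qed.

Lemma gauss_le_cauchy t : gauss t <= 2 / (1 + t ^ 2).
Proof.
  pose proof (gauss_exp_ineq t). pose proof (gauss_pos t). pose proof (pow2_ge_0 t).
  rewrite <- (Rinv_inv (gauss t)).
  replace (2 / (1 + t ^ 2)) with (/ ((1 + t ^ 2) / 2)) by (field; lra).
  apply Rinv_le_contravar; lra.
Qed.

Lemma continuous_gauss t : continuous gauss t.
Proof. apply (ex_derive_continuous gauss). unfold gauss. auto_derive. auto. Qed.

Lemma ex_RInt_gauss a b : ex_RInt gauss a b.
Proof.
  apply (ex_RInt_continuous (V := R_CompleteNormedModule)). intros; apply continuous_gauss.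
Qed.

Lemma RInt_gauss_le_2PI a b : a <= b -> RInt gauss a b <= 2 * PI.
Proof.
  intros Hab. set (cauchy := fun t => 2 / (1 + t ^ 2)).
  assert (Hint : is_RInt cauchy a b (2 * atan b - 2 * atan a)).
  { apply (is_RInt_derive (V := R_CompleteNormedModule) (fun t => 2 * atan t)).
    - intros t _. unfold cauchy. auto_derive; [auto|]. unfold Rsqr. field. nra.
    - intros t _. apply (ex_derive_continuous cauchy). unfold cauchy. auto_derive. nra. }
  apply Rle_trans with (RInt cauchy a b).
  - apply RInt_le; auto; [apply ex_RInt_gauss | eexists; exact Hint | ].
    intros; apply gauss_le_cauchy.
  - rewrite (is_RInt_unique _ _ _ _ Hint). pose proof (atan_bound a). pose proof (atan_bound b).
    lra.
Qed.

Lemma sqrt_2PI_ge_2 : 2 <= sqrt (2 * PI).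
Proof.
  rewrite <- (sqrt_square 2) at 1 by lra. apply sqrt_le_1_alt. pose proof PI2_1. lra.
Qed.

Lemma Phi_is_RInt_gen y l :
  is_RInt_gen gauss (Rbar_locally m_infty) (at_point y) l -> Phi y = / sqrt (2 * PI) * l.
Proof. intros H. unfold Phi. f_equal. now apply is_RInt_gen_unique. Qed.

Lemma Phi_gauss_integral y :
  exists l, is_RInt_gen gauss (Rbar_locally m_infty) (at_point y) l /\ 0 <= l <= 2 * PI.
Proof.
  apply is_RInt_gen_m_infty_of_bounded.
  - apply ex_RInt_gauss.
  - intros t; left; apply gauss_pos.
  - intros a Ha. now apply RInt_gauss_le_2PI.
Qed.

Lemma Phi_bounds y : 0 <= Phi y <= 4.
Proof.
  destruct (Phi_gauss_integral y) as [l [Hl Hb]]. rewrite (Phi_is_RInt_gen y l Hl).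
  pose proof sqrt_2PI_ge_2. pose proof PI_4.
  assert (0 < / sqrt (2 * PI) <= / 2)
    by (split; [apply Rinv_0_lt_compat | apply Rinv_le_contravar]; lra).
  split; nra.
Qed.

Lemma Phi_sub u v : Phi v - Phi u = / sqrt (2 * PI) * RInt gauss u v.
Proof.
  destruct (Phi_gauss_integral u) as [l [Hl _]].
  assert (Huv : is_RInt_gen gauss (at_point u) (at_point v) (RInt gauss u v))
    by (apply is_RInt_gen_at_point;
        apply (RInt_correct (V := R_CompleteNormedModule)), ex_RInt_gauss).
  rewrite (Phi_is_RInt_gen v _ (is_RInt_gen_Chasles gauss u l _ Hl Huv)).
  rewrite (Phi_is_RInt_gen u _ Hl). change (plus l (RInt gauss u v)) with (l + RInt gauss u v).
  ring.
Qed.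

Lemma Phi_sub_le_4 u v : Rabs (Phi u - Phi v) <= 4.
Proof. pose proof (Phi_bounds u). pose proof (Phi_bounds v). apply Rabs_le. lra. Qed.

Lemma Phi_sub_le u v M :
  (forall t, Rmin v u <= t <= Rmax v u -> gauss t <= M) -> Rabs (Phi u - Phi v) <= Rabs (u - v) * M.
Proof.
  intros HM. rewrite Phi_sub, Rabs_mult.
  pose proof sqrt_2PI_ge_2.
  assert (0 < / sqrt (2 * PI) <= 1)
    by (split; [apply Rinv_0_lt_compat | rewrite <- Rinv_1; apply Rinv_le_contravar]; lra).
  rewrite (Rabs_pos_eq (/ _)) by lra.
  assert (Hint : Rabs (RInt gauss v u) <= Rabs (u - v) * M).
  { apply (norm_RInt_le_const_abs gauss v u);
      [|apply (RInt_correct (V := R_CompleteNormedModule)), ex_RInt_gauss].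
    intros t Ht. change (Rabs (gauss t) <= M). rewrite Rabs_pos_eq by (left; apply gauss_pos).
    now apply HM. }
  pose proof (Rabs_pos (RInt gauss v u)). nra.
Qed.

Lemma Phi_lipschitz u v : Rabs (Phi u - Phi v) <= Rabs (u - v).
Proof. rewrite <- (Rmult_1_r (Rabs (u - v))). apply Phi_sub_le. intros; apply gauss_le_1. Qed.

(* Between c + l1 x and c + l2 x the argument stays at distance >= min(l1, l2) |x|
   from c, where |t| gauss t <= 1 makes gauss small. *)
Lemma Phi_rescale c x l1 l2 :
  0 < l1 -> 0 < l2 ->
  Rabs (Phi (c + l1 * x) - Phi (c + l2 * x)) <= Rabs (l1 - l2) * (1 + Rabs c) / Rmin l1 l2.
Proof.
  intros H1 H2. set (m := Rmin l1 l2).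
  assert (Hm : 0 < m) by (apply Rmin_glb_lt; auto).
  assert (Hm1 : m <= l1) by apply Rmin_l. assert (Hm2 : m <= l2) by apply Rmin_r.
  assert (Hc : 0 <= Rabs c) by apply Rabs_pos.
  destruct (Req_dec x 0) as [-> | Hx].
  { rewrite !Rmult_0_r, Rminus_diag, Rabs_R0. apply Rdiv_le_0_compat; [|lra].
    apply Rmult_le_pos; [apply Rabs_pos | lra]. }
  assert (Hax : 0 < Rabs x) by now apply Rabs_pos_lt.
  eapply Rle_trans; [apply Phi_sub_le with (M := (1 + Rabs c) / (m * Rabs x))|].
  - intros t Ht.
    assert (Hdist : m * Rabs x <= Rabs (t - c)).
    { destruct (Rle_dec 0 x).
      + assert (c + m * x <= Rmin (c + l2 * x) (c + l1 * x)) by (apply Rmin_glb; nra).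
        rewrite (Rabs_pos_eq x), (Rabs_pos_eq (t - c)); nra.
      + assert (Rmax (c + l2 * x) (c + l1 * x) <= c + m * x) by (apply Rmax_lub; nra).
        rewrite (Rabs_left x), (Rabs_left1 (t - c)); nra. }
    assert (Rabs (t - c) <= Rabs t + Rabs c).
    { unfold Rminus. rewrite <- (Rabs_Ropp c). apply Rabs_triang. }
    pose proof (abs_mul_gauss_le_1 t). pose proof (gauss_le_1 t). pose proof (gauss_pos t).
    apply Rmult_le_reg_r with (m * Rabs x); [nra|].
    unfold Rdiv. rewrite Rmult_assoc, Rinv_l by nra. nra.
  - replace (c + l1 * x - (c + l2 * x)) with ((l1 - l2) * x) by ring.
    rewrite Rabs_mult. right. field. lra.
Qed.

(** * Expansions around k = c0 s *)

Definition sigma0 : R := sqrt sigma0_sq.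
Definition kappa : R := sqrt (3 / 5) * Rpower 5 (3 / 4).

Lemma sigma0_sq_bounds : 0.0074 < sigma0_sq < 0.0075.
Proof. unfold sigma0_sq. pose proof sqrt5_bounds. lra. Qed.

Lemma sigma0_sqr : sigma0 * sigma0 = sigma0_sq.
Proof. apply sqrt_sqrt. pose proof sigma0_sq_bounds. lra. Qed.

Lemma sigma0_bounds : 0.086 < sigma0 < 0.0867.
Proof.
  pose proof sigma0_sqr. pose proof sigma0_sq_bounds.
  pose proof (sqrt_pos sigma0_sq) as Hpos. fold sigma0 in Hpos. split; nra.
Qed.

Lemma Rpower_5_3_4_sqr : Rpower 5 (3 / 4) * Rpower 5 (3 / 4) = 5 * sqrt 5.
Proof.
  rewrite <- Rpower_plus. replace (3 / 4 + 3 / 4) with (1 + / 2) by field.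
  rewrite Rpower_plus, Rpower_1, Rpower_sqrt by lra. reflexivity.
Qed.

Lemma kappa_sqr : kappa * kappa = 3 * sqrt 5.
Proof.
  unfold kappa.
  replace (sqrt (3 / 5) * Rpower 5 (3 / 4) * (sqrt (3 / 5) * Rpower 5 (3 / 4)))
    with (sqrt (3 / 5) * sqrt (3 / 5) * (Rpower 5 (3 / 4) * Rpower 5 (3 / 4))) by ring.
  rewrite sqrt_sqrt, Rpower_5_3_4_sqr by lra. field.
Qed.

Lemma kappa_pos : 0 < kappa.
Proof. apply Rmult_lt_0_compat; [apply sqrt_lt_R0; lra | apply exp_pos]. Qed.

Lemma kappa_bounds : 2.58 < kappa < 2.6.
Proof. pose proof kappa_sqr. pose proof kappa_pos. pose proof sqrt5_bounds. split; nra. Qed.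

(* kappa (defined to make b t_k = - kappa (k - k0) / sqrt s) is the slope in k of
   (mu - mu_k) / sigma_k near k = c0 s. *)
Lemma kappa_eq : kappa = sqrt 5 / (10 * sigma0).
Proof.
  pose proof sigma0_bounds. pose proof sigma0_sqr. pose proof sqrt5_sq. pose proof sqrt5_bounds.
  pose proof kappa_sqr. pose proof kappa_pos.
  assert (Hq : (sqrt 5 / (10 * sigma0)) * (sqrt 5 / (10 * sigma0)) = kappa * kappa).
  { replace (sqrt 5 / (10 * sigma0) * (sqrt 5 / (10 * sigma0)))
      with (sqrt 5 * sqrt 5 / (100 * (sigma0 * sigma0))) by (field; lra).
    rewrite kappa_sqr, sigma0_sqr, sqrt5_sq. unfold sigma0_sq.
    replace 5 with (sqrt 5 * sqrt 5) at 1 by exact sqrt5_sq. field. lra. }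
  assert (0 < sqrt 5 / (10 * sigma0)) by (apply Rdiv_lt_0_compat; lra).
  nra.
Qed.

Lemma a_const_sqr : a_const * a_const = 8 / 5.
Proof. apply sqrt_sqrt. lra. Qed.

Lemma a_const_bounds : 1.264 < a_const < 1.265.
Proof.
  pose proof a_const_sqr. pose proof (sqrt_pos (8 / 5)) as Hpos. fold a_const in Hpos. split; nra.
Qed.

Lemma b_const_t_k s k : b_const * t_k s k = - (kappa * (INR k - k0 s) / sqrt (INR s)).
Proof. unfold b_const, t_k, kappa, Rdiv. ring. Qed.

Lemma kappa_shift_sq_le s k : (kappa * (INR k - k0 s) / sqrt (INR s)) ^ 2 <= t_k s k ^ 2.
Proof.
  assert (Hb : b_const ^ 2 <= 1).
  { unfold b_const. rewrite <- Rsqr_pow2, <- Rsqr_neg, Rsqr_sqrt by lra. lra. }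
  rewrite <- (Ropp_involutive (kappa * _ / _)), <- b_const_t_k, <- Rsqr_pow2, <- Rsqr_neg,
    Rsqr_pow2, Rpow_mult_distr.
  pose proof (pow2_ge_0 (t_k s k)). nra.
Qed.

Lemma mu_k_expansion S K :
  / 2 * K * (S + 1 - K) =
  S ^ 2 / 10 + c0 * S / 2 + (K - c0 * S) * S * sqrt 5 / 10 + ((K - c0 * S) - (K - c0 * S) ^ 2) / 2.
Proof.
  apply Rminus_diag_uniq.
  transitivity (S ^ 2 * (5 - sqrt 5 * sqrt 5) / 200); [unfold c0; field|].
  rewrite sqrt5_sq. field.
Qed.

Lemma sigma_k2_expansion S K (u := K - c0 * S) :
  720 * (/ 12 * K * (S + 1 - K) * (S - 2 * K) - sigma0_sq * S ^ 3) =
  12 * c0 * sqrt 5 * S ^ 2 - 12 * u * S ^ 2 + 12 * u * S * sqrt 5 - 36 * u ^ 2 * S * sqrt 5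
  - 120 * c0 * u * S - 120 * u ^ 2 + 120 * u ^ 3.
Proof.
  apply Rminus_diag_uniq.
  transitivity ((5 - sqrt 5 * sqrt 5) * (- 18/5 * K * S ^ 2 + 9/5 * S ^ 3 - 6/25 * S ^ 3 * sqrt 5));
    [unfold u, c0, sigma0_sq; field|].
  rewrite sqrt5_sq. ring.
Qed.

Lemma sigma_k2_approx S K :
  1 <= S -> Rabs (K - c0 * S) <= S / 10000 ->
  Rabs (/ 12 * K * (S + 1 - K) * (S - 2 * K) - sigma0_sq * S ^ 3)
    <= (1 + Rabs (K - c0 * S)) * S ^ 2 / 8.
Proof.
  intros HS Hu. pose proof (sigma_k2_expansion S K) as Hexp. cbv zeta in Hexp.
  set (u := K - c0 * S) in *. set (a := Rabs u) in *.
  pose proof (Rabs_le_inv u a (Rle_refl a)) as Hua.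
  pose proof sqrt5_bounds. pose proof c0_bounds.
  assert (HS2 : S <= S ^ 2) by nra.
  assert (Ha : 0 <= a) by apply Rabs_pos.
  assert (Hu2 : u ^ 2 <= a * (S / 10000)) by (rewrite <- (pow2_abs u); fold a; nra).
  assert (Hu3_c : - a * S ^ 2 <= 120 * u ^ 3 <= a * S ^ 2).
  { assert (Hq : 0 <= 120 * u ^ 2 <= S ^ 2) by (split; [pose proof (pow2_ge_0 u) | ]; nra).
    replace (120 * u ^ 3) with (120 * u ^ 2 * u) by ring.
    assert (0 <= 120 * u ^ 2 * (a - u)) by (apply Rmult_le_pos; lra).
    assert (0 <= 120 * u ^ 2 * (a + u)) by (apply Rmult_le_pos; lra).
    assert (0 <= a * (S ^ 2 - 120 * u ^ 2)) by (apply Rmult_le_pos; lra).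
    split; nra. }
  assert (Hconst : 0 <= 12 * c0 * sqrt 5 * S ^ 2 <= 15/2 * S ^ 2).
  { assert (0 <= c0 * sqrt 5 <= 0.62) by (split; nra).
    replace (12 * c0 * sqrt 5 * S ^ 2) with (12 * (c0 * sqrt 5) * S ^ 2) by ring. split; nra. }
  assert (Hu_SS : - 12 * a * S ^ 2 <= 12 * u * S ^ 2 <= 12 * a * S ^ 2) by (split; nra).
  assert (Hu_S5 : - 27 * a * S ^ 2 <= 12 * u * S * sqrt 5 <= 27 * a * S ^ 2).
  { assert (0 <= S * sqrt 5 <= 2.25 * S ^ 2) by (split; nra).
    replace (12 * u * S * sqrt 5) with (12 * u * (S * sqrt 5)) by ring. split; nra. }
  assert (Hu2_S5 : 0 <= 36 * u ^ 2 * S * sqrt 5 <= a * S ^ 2).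
  { pose proof (pow2_ge_0 u). assert (0 <= a * S) by nra.
    assert (Hu2S : 0 <= u ^ 2 * S <= a * S ^ 2 / 10000) by (split; nra).
    replace (36 * u ^ 2 * S * sqrt 5) with (36 * sqrt 5 * (u ^ 2 * S)) by ring.
    assert (36 * sqrt 5 * (u ^ 2 * S) <= 81 * (u ^ 2 * S)) by (apply Rmult_le_compat_r; lra).
    split; nra. }
  assert (Hc0_u_S : - 34 * a * S ^ 2 <= 120 * c0 * u * S <= 34 * a * S ^ 2).
  { assert (0 <= 120 * c0 * S <= 34 * S ^ 2) by (split; nra).
    replace (120 * c0 * u * S) with (u * (120 * c0 * S)) by ring. split; nra. }
  assert (Hu2_c : 0 <= 120 * u ^ 2 <= a * S ^ 2).
  { assert (0 <= a * S) by nra. split; [pose proof (pow2_ge_0 u) |]; nra. }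
  apply Rabs_le. split; nra.
Qed.

Lemma sqrt_sub_le X Y : 0 <= X -> 0 < Y -> Rabs (sqrt X - sqrt Y) <= Rabs (X - Y) / sqrt Y.
Proof.
  intros HX HY. pose proof (sqrt_lt_R0 Y HY). pose proof (sqrt_pos X).
  assert (Hdiff : X - Y = (sqrt X - sqrt Y) * (sqrt X + sqrt Y)).
  { rewrite <- (sqrt_sqrt X) at 1 by lra. rewrite <- (sqrt_sqrt Y) at 1 by lra. ring. }
  replace (sqrt X - sqrt Y) with ((X - Y) / (sqrt X + sqrt Y)) by (rewrite Hdiff; field; lra).
  rewrite Rabs_div, (Rabs_pos_eq (sqrt X + sqrt Y)) by lra.
  apply Rmult_le_compat_l; [apply Rabs_pos | apply Rinv_le_contravar; lra].
Qed.

Lemma Rdiv_le_compat x x' y y' : 0 <= x <= x' -> 0 < y' <= y -> x / y <= x' / y'.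
Proof.
  intros Hx Hy. unfold Rdiv. apply Rmult_le_compat; try lra.
  - left; apply Rinv_0_lt_compat; lra.
  - apply Rinv_le_contravar; lra.
Qed.

(** * The estimate for large s *)

Section LargeSize.

Variables S r K k0 mu sig2 : R.
Hypothesis r_large : 1e8 <= r.
Hypothesis S_sq : S = r * r.
Hypothesis k0_bounds : c0 * S - 1 < k0 <= c0 * S.
Hypothesis K_near : (K - c0 * S) ^ 2 <= r ^ 3.
Hypothesis mu_near : Rabs (mu - (S ^ 2 / 10 + c0 * S / 2)) <= S.
Hypothesis sig2_nonneg : 0 <= sig2.
Hypothesis sig2_near : Rabs (sig2 - 8 / 5 * sigma0_sq * S ^ 3) <= 10 * S ^ 2.

(* With S = s, K = k and r = sqrt s: sk2 is sigma_k^2, N is mu - mu_k, shift is - b t_k,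
   and p = sigma0 s^(3/2) is the common leading order of sigma_k and of sigma / a. *)
Let u := K - c0 * S.
Let shift := kappa * (K - k0) / r.
Let V := 1 + shift ^ 2.
Let p := sigma0 * r ^ 3.
Let sk2 := / 12 * K * (S + 1 - K) * (S - 2 * K).
Let N := mu - / 2 * K * (S + 1 - K).

Lemma one_le_V : 1 <= V.
Proof. unfold V. pose proof (pow2_ge_0 shift). lra. Qed.

Lemma S_large : 1e16 <= S.
Proof. rewrite S_sq. nra. Qed.

Lemma abs_u_small : Rabs u <= S / 10000.
Proof.
  rewrite <- (Rabs_pos_eq (S / 10000)) by (pose proof S_large; lra).
  apply Rsqr_le_abs_0. rewrite !Rsqr_pow2. apply Rle_trans with (r ^ 3); [exact K_near|].
  rewrite S_sq. assert (0 <= r ^ 3) by (apply pow_le; lra). nra.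
Qed.

Lemma abs_u_le_shift : Rabs u <= Rabs shift * r / kappa + 1.
Proof.
  pose proof kappa_pos.
  replace u with (shift * r / kappa - (c0 * S - k0)) by (unfold u, shift; field; lra).
  pose proof (Rabs_triang (shift * r / kappa) (- (c0 * S - k0))) as Htri.
  rewrite Rabs_Ropp, (Rabs_pos_eq (c0 * S - k0)), Rabs_div, Rabs_mult, (Rabs_pos_eq r),
    (Rabs_pos_eq kappa) in Htri by lra.
  eapply Rle_trans; [exact Htri | lra].
Qed.

Lemma one_plus_abs_u_sq : (1 + Rabs u) ^ 2 <= 8 * V * S.
Proof.
  pose proof abs_u_le_shift. pose proof kappa_bounds. pose proof (Rabs_pos u).
  set (z := Rabs shift * r / kappa) in *.
  assert (Hz : z ^ 2 * (kappa * kappa) = shift ^ 2 * S).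
  { unfold z. rewrite S_sq, <- (pow2_abs shift). field. lra. }
  assert (0 <= z) by (unfold z; pose proof (Rabs_pos shift); apply Rdiv_le_0_compat; nra).
  assert (z ^ 2 <= shift ^ 2 * S).
  { rewrite <- Hz. pose proof (pow2_ge_0 z). assert (1 <= kappa * kappa) by nra. nra. }
  assert ((1 + Rabs u) ^ 2 <= (2 + z) ^ 2) by (apply pow_incr; lra).
  assert ((2 + z) ^ 2 <= 6 + 3 * z ^ 2) by (pose proof (pow2_ge_0 (z - 1)); nra).
  pose proof S_large. unfold V. pose proof (pow2_ge_0 shift). nra.
Qed.

Lemma p_sqr : p ^ 2 = sigma0_sq * S ^ 3.
Proof. unfold p. rewrite S_sq, <- sigma0_sqr. ring. Qed.

Lemma p_pos : 0 < p.
Proof. unfold p. pose proof sigma0_bounds. apply Rmult_lt_0_compat; [lra | apply pow_lt; lra]. Qed.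

Lemma sk2_near : Rabs (sk2 - p ^ 2) <= (1 + Rabs u) * S ^ 2 / 8.
Proof.
  rewrite p_sqr. apply sigma_k2_approx; [pose proof S_large; lra | apply abs_u_small].
Qed.

Lemma sk2_near_rel : Rabs (sk2 - p ^ 2) <= p ^ 2 / 4.
Proof.
  eapply Rle_trans; [apply sk2_near|]. rewrite p_sqr.
  pose proof abs_u_small. pose proof S_large. pose proof sigma0_sq_bounds.
  assert (1 + Rabs u <= S / 5000) by lra.
  assert (0 <= S ^ 2) by nra.
  assert ((1 + Rabs u) * S ^ 2 <= S / 5000 * S ^ 2) by (apply Rmult_le_compat_r; lra).
  assert (0.0074 * S ^ 3 <= sigma0_sq * S ^ 3) by (apply Rmult_le_compat_r; [apply pow_le|]; lra).
  replace (S / 5000 * S ^ 2) with (S ^ 3 / 5000) in * by field.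
  assert (0 <= S ^ 3) by (apply pow_le; lra). lra.
Qed.

Lemma sqrt_sk2_lower : p / 2 <= sqrt sk2.
Proof.
  pose proof sk2_near_rel as H. apply Rabs_le_inv in H. pose proof p_pos.
  rewrite <- (sqrt_square (p / 2)) by lra. apply sqrt_le_1_alt. nra.
Qed.

Lemma sqrt_sk2_near : Rabs (sqrt sk2 - p) <= (1 + Rabs u) * S ^ 2 / (8 * p).
Proof.
  pose proof sk2_near_rel as H. apply Rabs_le_inv in H. pose proof p_pos.
  rewrite <- (sqrt_pow2 p) at 1 by lra.
  eapply Rle_trans; [apply sqrt_sub_le; nra|]. rewrite sqrt_pow2 by lra.
  replace ((1 + Rabs u) * S ^ 2 / (8 * p)) with ((1 + Rabs u) * S ^ 2 / 8 / p) by (field; lra).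
  apply Rmult_le_compat_r; [left; apply Rinv_0_lt_compat; lra | apply sk2_near].
Qed.

Lemma N_expansion :
  N = (mu - (S ^ 2 / 10 + c0 * S / 2)) - u * S * sqrt 5 / 10 - (u - u ^ 2) / 2.
Proof. unfold N, u. rewrite mu_k_expansion. ring. Qed.

Lemma abs_N_le : Rabs N <= S * (1 + Rabs u).
Proof.
  rewrite N_expansion. pose proof abs_u_small. pose proof S_large. pose proof sqrt5_bounds.
  pose proof (Rabs_pos u).
  assert (Hlin : Rabs (u * S * sqrt 5 / 10) <= 0.3 * Rabs u * S).
  { rewrite Rabs_div, !Rabs_mult, (Rabs_pos_eq S), (Rabs_pos_eq (sqrt 5)), (Rabs_pos_eq 10)
      by lra.
    assert (0 <= Rabs u * S) by nra.
    replace (Rabs u * S * sqrt 5 / 10) with (Rabs u * S * (sqrt 5 / 10)) by field.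
    replace (0.3 * Rabs u * S) with (Rabs u * S * 0.3) by ring.
    apply Rmult_le_compat_l; lra. }
  assert (Hquad : Rabs ((u - u ^ 2) / 2) <= Rabs u * S / 2).
  { rewrite Rabs_div, (Rabs_pos_eq 2) by lra. unfold Rminus.
    eapply Rle_trans; [apply Rmult_le_compat_r; [lra | apply Rabs_triang]|].
    rewrite Rabs_Ropp, <- RPow_abs. nra. }
  eapply Rle_trans; [apply (Rabs_add_sub_le _ (- _))|]. rewrite Rabs_Ropp. nra.
Qed.

Lemma inv_sqrt_sk2_near : Rabs (/ sqrt sk2 - / p) <= (1 + Rabs u) * S ^ 2 / (4 * p ^ 3).
Proof.
  pose proof sqrt_sk2_lower. pose proof sqrt_sk2_near. pose proof p_pos.
  replace (/ sqrt sk2 - / p) with ((p - sqrt sk2) / (sqrt sk2 * p)) by (field; lra).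
  rewrite Rabs_div, Rabs_minus_sym, (Rabs_pos_eq (sqrt sk2 * p)) by nra.
  apply Rle_trans with ((1 + Rabs u) * S ^ 2 / (8 * p) / (p / 2 * p)).
  - apply Rdiv_le_compat; [split; [apply Rabs_pos | assumption] | split; nra].
  - right. field. lra.
Qed.

(* The leading term of N / p is exactly - kappa u / r, so N / p + shift only sees the lower
   order terms of N and the rounding c0 s - k0. *)
Lemma shift_decomposition :
  N / sqrt sk2 + shift
  = N * (/ sqrt sk2 - / p) + ((mu - (S ^ 2 / 10 + c0 * S / 2)) - (u - u ^ 2) / 2) / p
    + kappa * (c0 * S - k0) / r.
Proof.
  pose proof sqrt_sk2_lower. pose proof p_pos. pose proof sigma0_bounds.
  assert (Hshift : shift = kappa * u / r + kappa * (c0 * S - k0) / r)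
    by (unfold shift, u; field; lra).
  rewrite Hshift, N_expansion, kappa_eq. unfold p. rewrite S_sq. field. lra.
Qed.

Lemma shift_error_lead : Rabs (N * (/ sqrt sk2 - / p)) <= 3200 * V / r.
Proof.
  pose proof p_pos. pose proof sigma0_bounds. pose proof S_large. pose proof one_plus_abs_u_sq.
  pose proof abs_N_le. pose proof inv_sqrt_sk2_near. pose proof (Rabs_pos u).
  pose proof one_le_V.
  rewrite Rabs_mult.
  apply Rle_trans with (S * (1 + Rabs u) * ((1 + Rabs u) * S ^ 2 / (4 * p ^ 3))).
  { apply Rmult_le_compat; [apply Rabs_pos | apply Rabs_pos | assumption | assumption]. }
  apply Rle_trans with (2 / sigma0 ^ 3 * V / r).
  - replace (S * (1 + Rabs u) * ((1 + Rabs u) * S ^ 2 / (4 * p ^ 3)))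
      with ((1 + Rabs u) ^ 2 * S ^ 3 / (4 * p ^ 3)) by (field; lra).
    replace (2 / sigma0 ^ 3 * V / r) with (8 * V * S * S ^ 3 / (4 * p ^ 3))
      by (unfold p; rewrite S_sq; field; lra).
    apply Rmult_le_compat_r; [left; apply Rinv_0_lt_compat, Rmult_lt_0_compat, pow_lt; lra|].
    apply Rmult_le_compat_r; [apply pow_le|]; lra.
  - apply Rmult_le_compat_r; [left; apply Rinv_0_lt_compat; lra|].
    apply Rmult_le_compat_r; [lra|].
    apply Rle_trans with (2 / 0.086 ^ 3); [|lra].
    apply Rmult_le_compat_l; [lra|]. apply Rinv_le_contravar; [nra | apply pow_incr; lra].
Qed.

Lemma shift_error_lower :
  Rabs (((mu - (S ^ 2 / 10 + c0 * S / 2)) - (u - u ^ 2) / 2) / p) <= 60 * V / r.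
Proof.
  pose proof p_pos. pose proof sigma0_bounds. pose proof S_large. pose proof one_plus_abs_u_sq.
  pose proof (Rabs_pos u).
  pose proof one_le_V.
  set (E1 := mu - (S ^ 2 / 10 + c0 * S / 2)) in *.
  assert (Hnum : Rabs (E1 - (u - u ^ 2) / 2) <= 5 * V * S).
  { unfold Rminus at 1. eapply Rle_trans; [apply Rabs_triang|]. rewrite Rabs_Ropp.
    rewrite Rabs_div, (Rabs_pos_eq 2) by lra. unfold Rminus.
    pose proof (Rabs_triang u (- u ^ 2)) as Htri. rewrite Rabs_Ropp, <- RPow_abs in Htri.
    nra. }
  rewrite Rabs_div, (Rabs_pos_eq p) by lra.
  apply Rle_trans with (5 * V * S / p).
  { apply Rmult_le_compat_r; [left; apply Rinv_0_lt_compat|]; lra. }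
  replace (5 * V * S / p) with (5 / sigma0 * V / r) by (unfold p; rewrite S_sq; field; lra).
  apply Rmult_le_compat_r; [left; apply Rinv_0_lt_compat; lra|].
  apply Rmult_le_compat_r; [lra|].
  apply Rle_trans with (5 / 0.086); [|lra]. apply Rmult_le_compat_l; [lra|].
  apply Rinv_le_contravar; lra.
Qed.

Lemma shift_error : Rabs (N / sqrt sk2 + shift) <= 3300 * V / r.
Proof.
  pose proof shift_error_lead. pose proof shift_error_lower. pose proof kappa_bounds.
  pose proof one_le_V.
  assert (Hfloor : Rabs (kappa * (c0 * S - k0) / r) <= 3 * V / r).
  { rewrite Rabs_pos_eq by (apply Rdiv_le_0_compat; [apply Rmult_le_pos|]; lra).
    apply Rmult_le_compat_r; [left; apply Rinv_0_lt_compat; lra | nra]. }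
  rewrite shift_decomposition. eapply Rle_trans; [apply Rabs_triang|].
  eapply Rle_trans; [apply Rplus_le_compat_r, Rabs_triang|].
  assert (0 <= V / r) by (apply Rdiv_le_0_compat; lra). lra.
Qed.

Lemma sqrt_sig2_near : Rabs (sqrt sig2 - a_const * p) <= 10 * S ^ 2 / (a_const * p).
Proof.
  pose proof p_pos. pose proof a_const_bounds.
  assert (Hsq : (a_const * p) ^ 2 = 8 / 5 * sigma0_sq * S ^ 3).
  { rewrite Rpow_mult_distr, p_sqr, <- Rsqr_pow2, Rsqr_def, a_const_sqr. ring. }
  rewrite <- (sqrt_pow2 (a_const * p)) at 1 by nra.
  eapply Rle_trans; [apply sqrt_sub_le; [assumption | apply pow_lt; nra]|].
  rewrite sqrt_pow2, Hsq by nra.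
  apply Rmult_le_compat_r; [left; apply Rinv_0_lt_compat; nra | exact sig2_near].
Qed.

Lemma scale_ratio_near : Rabs (sqrt sig2 / sqrt sk2 - a_const) <= (2200 + 50 * Rabs u) / S.
Proof.
  pose proof p_pos. pose proof a_const_bounds. pose proof sigma0_sq_bounds.
  pose proof sigma0_bounds. pose proof S_large.
  pose proof sqrt_sk2_lower. pose proof sqrt_sk2_near. pose proof sqrt_sig2_near.
  pose proof (Rabs_pos u).
  assert (Hnum : Rabs (sqrt sig2 - a_const * sqrt sk2)
                 <= 10 * S ^ 2 / (a_const * p) + a_const * ((1 + Rabs u) * S ^ 2 / (8 * p))).
  { replace (sqrt sig2 - a_const * sqrt sk2)
      with ((sqrt sig2 - a_const * p) - a_const * (sqrt sk2 - p)) by ring.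
    unfold Rminus at 1. eapply Rle_trans; [apply Rabs_triang|].
    rewrite Rabs_Ropp, Rabs_mult, (Rabs_pos_eq a_const) by lra.
    apply Rplus_le_compat; [assumption | apply Rmult_le_compat_l; [lra | assumption]]. }
  replace (sqrt sig2 / sqrt sk2 - a_const) with ((sqrt sig2 - a_const * sqrt sk2) / sqrt sk2)
    by (field; lra).
  rewrite Rabs_div, (Rabs_pos_eq (sqrt sk2)) by lra.
  apply Rle_trans
    with ((10 * S ^ 2 / (a_const * p) + a_const * ((1 + Rabs u) * S ^ 2 / (8 * p))) / (p / 2)).
  { apply Rdiv_le_compat; [split; [apply Rabs_pos | exact Hnum] | split; lra]. }
  replace ((10 * S ^ 2 / (a_const * p) + a_const * ((1 + Rabs u) * S ^ 2 / (8 * p))) / (p / 2))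
    with ((20 / a_const + a_const / 4 * (1 + Rabs u)) / sigma0_sq / S)
    by (rewrite <- sigma0_sqr; unfold p; rewrite S_sq; field; repeat split; lra).
  apply Rmult_le_compat_r; [left; apply Rinv_0_lt_compat; lra|].
  assert (20 / a_const <= 15.83).
  { apply Rmult_le_reg_r with a_const; [lra|]. unfold Rdiv. rewrite Rmult_assoc, Rinv_l; lra. }
  assert (/ sigma0_sq <= 135.2).
  { apply Rmult_le_reg_r with sigma0_sq; [lra|]. rewrite Rinv_l; lra. }
  assert (0 <= 20 / a_const) by (apply Rdiv_le_0_compat; lra).
  unfold Rdiv at 1. apply Rle_trans with ((15.83 + 0.32 * (1 + Rabs u)) * 135.2); [|lra].
  apply Rmult_le_compat; [nra | left; apply Rinv_0_lt_compat; lra | nra | assumption].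
Qed.

Lemma scale_ratio_ge : 5 / 4 <= sqrt sig2 / sqrt sk2.
Proof.
  pose proof scale_ratio_near as H. apply Rabs_le_inv in H.
  pose proof abs_u_small. pose proof S_large. pose proof a_const_bounds.
  assert ((2200 + 50 * Rabs u) / S <= 0.01).
  { apply Rmult_le_reg_r with S; [lra|]. unfold Rdiv. rewrite Rmult_assoc, Rinv_l; lra. }
  lra.
Qed.

Lemma scale_error_factor : (2200 + 50 * Rabs u) * (1 + Rabs shift) <= 4600 * r * V.
Proof.
  pose proof abs_u_le_shift. pose proof kappa_bounds. pose proof (Rabs_pos shift).
  assert (Hu : Rabs u <= 0.4 * (Rabs shift * r) + 1).
  { assert (Rabs shift * r / kappa <= Rabs shift * r * 0.4); [|lra].
    unfold Rdiv. apply Rmult_le_compat_l; [nra|].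
    apply Rmult_le_reg_r with kappa; [lra|]. rewrite Rinv_l; lra. }
  assert (Hshift : Rabs shift <= V /\ Rabs shift + shift ^ 2 <= 2 * V).
  { unfold V. rewrite <- (pow2_abs shift). pose proof (pow2_ge_0 (Rabs shift - 1)). split; nra. }
  assert ((2200 + 50 * Rabs u) * (1 + Rabs shift)
          <= (2250 + 20 * (Rabs shift * r)) * (1 + Rabs shift))
    by (apply Rmult_le_compat_r; lra).
  pose proof one_le_V.
  assert (Hsq : Rabs shift * Rabs shift = shift ^ 2) by (rewrite <- (pow2_abs shift); ring).
  assert (0 <= r * (2 * V - (Rabs shift + shift ^ 2))) by (apply Rmult_le_pos; lra).
  assert (0 <= (r - 1e8) * V) by (apply Rmult_le_pos; lra).
  replace ((2250 + 20 * (Rabs shift * r)) * (1 + Rabs shift))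
    with (2250 * (1 + Rabs shift) + 20 * r * (Rabs shift + Rabs shift * Rabs shift)) in * by ring.
  rewrite Hsq in *. lra.
Qed.

Lemma scale_error x :
  Rabs (Phi (- shift + sqrt sig2 / sqrt sk2 * x) - Phi (- shift + a_const * x)) <= 3700 * V / r.
Proof.
  pose proof scale_ratio_near. pose proof scale_ratio_ge. pose proof a_const_bounds.
  pose proof S_large. pose proof (Rabs_pos shift). pose proof (Rabs_pos u).
  pose proof scale_error_factor as Hnum.
  eapply Rle_trans; [apply Phi_rescale; lra|]. rewrite Rabs_Ropp.
  assert (Hmin : 5 / 4 <= Rmin (sqrt sig2 / sqrt sk2) a_const) by (apply Rmin_glb; lra).
  apply Rle_trans with ((2200 + 50 * Rabs u) / S * (1 + Rabs shift) / (5 / 4)).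
  { apply Rdiv_le_compat; [split; [apply Rmult_le_pos; [apply Rabs_pos | lra] |] | lra].
    apply Rmult_le_compat_r; lra. }
  replace ((2200 + 50 * Rabs u) / S * (1 + Rabs shift) / (5 / 4))
    with ((2200 + 50 * Rabs u) * (1 + Rabs shift) / (5 / 4 * r) / r)
    by (rewrite S_sq; field; lra).
  assert (Hfin : (2200 + 50 * Rabs u) * (1 + Rabs shift) / (5 / 4 * r) <= 3700 * V).
  { apply Rle_trans with (4600 * r * V / (5 / 4 * r)).
    - apply Rmult_le_compat_r; [left; apply Rinv_0_lt_compat; lra | exact Hnum].
    - replace (4600 * r * V / (5 / 4 * r)) with (3680 * V) by (field; lra).
      pose proof one_le_V. lra. }
  unfold Rdiv in *. apply Rmult_le_compat_r; [left; apply Rinv_0_lt_compat; lra | exact Hfin].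
Qed.

Lemma Phi_estimate_large x :
  Rabs (Phi (/ sqrt sk2 * (N + x * sqrt sig2)) - Phi (a_const * x + - shift)) <= 7000 * V / r.
Proof.
  pose proof sqrt_sk2_lower. pose proof p_pos.
  replace (/ sqrt sk2 * (N + x * sqrt sig2)) with (N / sqrt sk2 + sqrt sig2 / sqrt sk2 * x)
    by (field; lra).
  replace (a_const * x + - shift) with (- shift + a_const * x) by ring.
  replace (Phi (N / sqrt sk2 + sqrt sig2 / sqrt sk2 * x) - Phi (- shift + a_const * x))
    with ((Phi (N / sqrt sk2 + sqrt sig2 / sqrt sk2 * x) - Phi (- shift + sqrt sig2 / sqrt sk2 * x))
          + (Phi (- shift + sqrt sig2 / sqrt sk2 * x) - Phi (- shift + a_const * x))) by ring.
  eapply Rle_trans; [apply Rabs_triang|].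
  pose proof (scale_error x). pose proof shift_error.
  assert (Rabs (Phi (N / sqrt sk2 + sqrt sig2 / sqrt sk2 * x)
                - Phi (- shift + sqrt sig2 / sqrt sk2 * x)) <= 3300 * V / r).
  { eapply Rle_trans; [apply Phi_lipschitz|].
    replace (N / sqrt sk2 + sqrt sig2 / sqrt sk2 * x - (- shift + sqrt sig2 / sqrt sk2 * x))
      with (N / sqrt sk2 + shift) by ring. assumption. }
  lra.
Qed.

End LargeSize.

Lemma k0_between s : c0 * INR s - 1 < k0 s <= c0 * INR s.
Proof. unfold k0. pose proof (base_Int_part (c0 * INR s)). lra. Qed.

Lemma k_near_c0s s k :
  2 <= sqrt (INR s) -> t_k s k ^ 2 < sqrt (INR s) ->
  (INR k - c0 * INR s) ^ 2 <= sqrt (INR s) ^ 3.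
Proof.
  intros Hr Ht. set (r := sqrt (INR s)) in *. pose proof (k0_between s) as Hk0.
  assert (Hz : t_k s k ^ 2 * r ^ 2 = 5 * sqrt 5 * (INR k - k0 s) ^ 2).
  { unfold t_k. fold r. rewrite <- Rpower_5_3_4_sqr. field. lra. }
  pose proof sqrt5_bounds. pose proof (pow2_ge_0 (INR k - k0 s)).
  assert (Hshift : (INR k - k0 s) ^ 2 * 11 <= r ^ 3).
  { assert (t_k s k ^ 2 * r ^ 2 <= r * r ^ 2)
      by (apply Rmult_le_compat_r; [apply pow2_ge_0 | lra]).
    nra. }
  replace (INR k - c0 * INR s) with ((INR k - k0 s) - (c0 * INR s - k0 s)) by ring.
  pose proof (pow2_ge_0 ((INR k - k0 s) + (c0 * INR s - k0 s))).
  assert (8 <= r ^ 3) by (replace 8 with (2 ^ 3) by ring; apply pow_incr; lra).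
  nra.
Qed.

Lemma crude_regime r t : 1 <= r -> r < 1e8 \/ r <= 1 + t ^ 2 -> 4 <= 1e9 / r * (1 + t ^ 2).
Proof.
  intros Hr Hcase. pose proof (pow2_ge_0 t).
  replace (1e9 / r * (1 + t ^ 2)) with (1e9 * (1 + t ^ 2) / r) by (field; lra).
  apply Rmult_le_reg_r with r; [lra|]. unfold Rdiv. rewrite Rmult_assoc, Rinv_l by lra.
  destruct Hcase; nra.
Qed.

Theorem corollary5 :
  exists C : R, forall (s k : nat) (x : R),
    (0 < s)%nat -> (0 < k)%nat -> (2 * k < s)%nat ->
    Rabs (Phi (y_k s k x) - Phi (y_k_star s k x))
      <= C / sqrt (INR s) * (1 + t_k s k ^ 2).
Proof.
  exists 1e9. intros s k x Hs _ _.
  set (r := sqrt (INR s)). set (t := t_k s k).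
  assert (Hr : 1 <= r) by (unfold r; rewrite <- sqrt_1; apply sqrt_le_1_alt, (le_INR 1); lia).
  assert (HSr : INR s = r * r) by (unfold r; rewrite sqrt_sqrt; [|apply pos_INR]; reflexivity).
  destruct (Rlt_or_le r 1e8) as [Hsmall | Hlarge];
    [|destruct (Rle_or_lt r (1 + t ^ 2)) as [Hsteep | Hflat]].
  1, 2: eapply Rle_trans; [apply Phi_sub_le_4 | apply crude_regime; lra].
  set (shift := kappa * (INR k - k0 s) / r).
  assert (Hshift : shift ^ 2 <= t ^ 2) by apply kappa_shift_sq_le.
  unfold y_k_star. rewrite b_const_t_k. fold r shift.
  eapply Rle_trans.
  { apply (Phi_estimate_large (INR s) r (INR k) (k0 s) (mu s) (sigma2 s)); auto.
    - apply k0_between.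
    - apply k_near_c0s; fold r t; lra.
    - apply mu_approx, Hs.
    - apply sigma2_nonneg.
    - apply sigma2_approx. nra. }
  replace (1e9 / r * (1 + t ^ 2)) with (1e9 * (1 + t ^ 2) / r) by (field; lra).
  apply Rmult_le_compat_r; [left; apply Rinv_0_lt_compat; lra|].
  fold shift. pose proof (pow2_ge_0 t). lra.
Qed.
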